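(* Consider an execution of \texttt{ThresholdMonitor} (described in the context) on a database $S$, with parameters $\varepsilon,\delta,t,k$, interacting with a stream of $m$ adaptively chosen queries $f_1,f_2,\dots,f_m:X\to[0,1]$. Let $S_i$ denote the database $S$ as it is before answering the $i$th query. Then for every $\beta>0$, with probability at least $1-\beta$: (1) for every $i$ such that $a_i=\top$ it holds that $f_i(S_i)\geq t-\tilde{O}\left(\frac{1}{\varepsilon}\log\left(\frac{1}{\delta}\right)\log\left(\frac{m}{\beta}\right)\right)$; (2) for every $i$ such that $a_i=\bot$ it holds that $f_i(S_i)\leq t+\tilde{O}\left(\frac{1}{\varepsilon}\log\left(\frac{1}{\delta}\right)\log\left(\frac{m}{\beta}\right)\right)$.
   Context: $X$ is a data domain; a database $S$ is a finite multiset of elements of $X$. For a query $f:X\to[0,1]$ and database $D$, $f(D)=\sum_{x\in D}f(x)$. $\mathrm{Lap}(b)$ denotes the Laplace distribution with density $\frac{1}{2b}e^{-|x|/b}$. Algorithm \texttt{ThresholdMonitor}. Input: database $S$, privacy parameters $\varepsilon,\delta$, threshold $t$, parameter $k$, and an adaptively chosen stream of queries $f_i:X\to[0,1]$. Initialize a counter $c(x)=0$ for all $x\in X$. Let $\Delta=\frac{1}{\varepsilon}\log\left(\frac{1}{\delta}\right)\log\left(\frac{1}{\varepsilon}\log\frac{1}{\delta}\right)$. In each round $i$, on receiving $f_i$: sample independently $w_i\sim\mathrm{Lap}(10\Delta)$ and $v_i\sim\mathrm{Lap}(\frac{1}{\varepsilon}\log\frac{1}{\delta})$; set $\overline{v}_i=\min\{v_i,\Delta\}$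 and $\hat f_i=f_i(S)+w_i+\overline{v}_i$ (with $S$ the current database). If $\hat f_i<t$ output $a_i=\bot$. Otherwise output $a_i=\top$, set $c(x)\leftarrow c(x)+f_i(x)$ for every $x\in X$, and delete from $S$ every element $x$ with $c(x)\geq k$. Proceed to the next round. *)

From HB Require Import structures.
From mathcomp Require Import all_boot all_order all_algebra.
From mathcomp Require Import all_classical all_reals all_analysis.
Set Implicit Arguments. Unset Strict Implicit. Unset Printing Implicit Defensive.
Import Order.TTheory GRing.Theory Num.Theory.
Local Open Scope classical_set_scope.
Local Open Scope ring_scope.

Definition laplace_pdf {R : realType} (b x : R) : R :=
  (2 * b)^-1 * expR (- `|x| / b).

Definition is_laplace {R : realType} (d : measure_display) (T : measurableType d)
  (P : probability T R) (b : R) (Y : {RV P >-> R}) : Prop :=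
  forall A : set R, measurable A ->
    P (Y @^-1` A) = (\int[@lebesgue_measure R]_(x in A) (laplace_pdf b x)%:E)%E.

Definition mutually_independent {R : realType} (d : measure_display)
  (T : measurableType d) (P : probability T R) (I : eqType)
  (Y : I -> {RV P >-> R}) : Prop :=
  forall (J : seq I) (B : I -> set R), uniq J -> (forall i, measurable (B i)) ->
    P (\big[setI/setT]_(i <- J) (Y i @^-1` B i)) =
    (\prod_(i <- J) P (Y i @^-1` B i))%E.

Definition tm_Delta {R : realType} (eps delta : R) : R :=
  eps^-1 * ln delta^-1 * ln (eps^-1 * ln delta^-1).

(* f(D) = sum_{x in D} f(x), D a finite multiset represented as a list. *)
Definition qeval {R : realType} {X : Type} (f : X -> R) (D : seq X) : R :=
  \sum_(x <- D) f x.

(* State of the algorithm: current database, counters, transcript of answers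
   (true = top, false = bot). *)
Record tm_state {R : realType} {X : Type} := TMState {
  tm_db : seq X;
  tm_cnt : X -> R;
  tm_hist : seq bool }.
Arguments tm_state : clear implicits.

Definition tm_fhat {R : realType} {X : Type} (Delta : R) (f : X -> R)
  (w v : R) (st : tm_state R X) : R :=
  qeval f (tm_db st) + w + Num.min v Delta.

Definition tm_step {R : realType} {X : Type} (Delta t k : R) (f : X -> R)
  (w v : R) (st : tm_state R X) : tm_state R X :=
  if tm_fhat Delta f w v st < t then
    TMState (tm_db st) (tm_cnt st) (rcons (tm_hist st) false)
  else
    let c' := fun x => tm_cnt st x + f x in
    TMState [seq x <- tm_db st | c' x < k] c' (rcons (tm_hist st) true).

(* The (deterministic) adaptive analyst chooses query number i (0-based) as a
   function A of the transcript of previous answers. *)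
Definition tm_query {R : realType} {X : Type} (A : seq bool -> X -> R)
  (st : tm_state R X) : X -> R := A (tm_hist st).

(* State before answering query i (0-based); round j uses noises w j, v j. *)
Fixpoint tm_state_at {R : realType} {X : Type} (eps delta t k : R)
  (A : seq bool -> X -> R) (S : seq X) (w v : nat -> R) (i : nat)
  : tm_state R X :=
  match i with
  | 0 => TMState S (fun _ => 0) [::]
  | j.+1 =>
    let st := tm_state_at eps delta t k A S w v j in
    tm_step (tm_Delta eps delta) t k (tm_query A st) (w j) (v j) st
  end.

(* S_i, f_i and a_i (a_i = true iff a_i = top), all 0-based. *)
Definition tm_S {R : realType} {X : Type} eps delta t k A (S : seq X)
  (w v : nat -> R) i := tm_db (tm_state_at eps delta t k A S w v i).
Definition tm_f {R : realType} {X : Type} eps delta t k A (S : seq X)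
  (w v : nat -> R) i := tm_query A (tm_state_at eps delta t k A S w v i).
Definition tm_answer {R : realType} {X : Type} (eps delta t k : R) A
  (S : seq X) (w v : nat -> R) i : bool :=
  ~~ (tm_fhat (tm_Delta eps delta) (tm_f eps delta t k A S w v i) (w i) (v i)
        (tm_state_at eps delta t k A S w v i) < t).

From HB Require Import structures.
From mathcomp Require Import all_boot all_order all_algebra.
From mathcomp Require Import all_classical all_reals all_analysis.
From mathcomp Require Import ring lra measurable_realfun.
Set Implicit Arguments. Unset Strict Implicit. Unset Printing Implicit Defensive.
Import Order.TTheory GRing.Theory Num.Theory numFieldNormedType.Exports.
Local Open Scope classical_set_scope.
Local Open Scope ring_scope.

(* Let L = (1/eps) log(1/delta) and q = ln(2m/beta).  Whenever every noise
   sample is small, |w_i| <= 10 Delta q and |v_i| <= L q, each answer is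
   correct up to |w_i| + Delta (for top) or |w_i| + |v_i| (for bot), because
   the capped noise min(v_i, Delta) lies between -|v_i| and Delta; both
   slacks are O(L q log L).  A Lap(b) sample exceeds b q in absolute value
   with probability exp(-q) = beta/(2m), so a union bound over the 2m samples
   bounds the failure probability by beta. *)

Section laplace_tail.
Context {R : realType}.
Local Notation mu := (@lebesgue_measure R).

Lemma continuous_laplace_pdf (b : R) : continuous (laplace_pdf b).
Proof.
move=> x; apply: cvgM; first exact: cvg_cst.
apply: continuous_comp; last exact: continuous_expR.
by apply: cvgMl; apply: cvgN; exact: norm_continuous.
Qed.

Variable b : R.
Hypothesis b_gt0 : 0 < b.

Lemma integral_laplace_pdf_itv0c (s : R) : 0 < s ->
  (\int[mu]_(x in `[0%R, s]) (laplace_pdf b x)%:E =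
   (2^-1 * (1 - expR (- s / b)))%:E)%E.
Proof.
move=> s_gt0.
transitivity (\int[mu]_(x in `[0%R, s]) ((2^-1)%:E * (exponential_pdf b^-1 x)%:E))%E.
  apply: eq_integral => x; rewrite inE /= in_itv /= => /andP[x_ge0 _].
  rewrite -EFinM /laplace_pdf exponential_pdfE// (ger0_norm x_ge0).
  by rewrite invfM mulrA !mulNr [b^-1 * x]mulrC.
rewrite ge0_integralZl_EFin//; last 2 first.
- by move=> x _; rewrite lee_fin exponential_pdf_ge0// invr_ge0 ltW.
- by apply/measurable_EFinP/measurable_funTS; exact: measurable_exponential_pdf.
have := exponential_prob_itv0c b^-1 s_gt0; rewrite /exponential_prob => ->.
by rewrite -EFinB -EFinM !mulNr [s / b]mulrC.
Qed.

Lemma integral_laplace_pdf_itvNc0 (s : R) : 0 < s ->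
  (\int[mu]_(x in `[(- s)%R, 0%R]) (laplace_pdf b x)%:E =
   \int[mu]_(x in `[0%R, s]) (laplace_pdf b x)%:E)%E.
Proof.
move=> s_gt0; rewrite -[in LHS]oppr0 integration_by_substitution_oppr ?ltW//.
  by apply: eq_integral => x _ /=; rewrite /laplace_pdf normrN.
exact/continuous_subspaceT/continuous_laplace_pdf.
Qed.

Lemma abs_gtE (s : R) : [set x : R | s < `|x|] = ~` `[(- s)%R, s].
Proof.
by apply/seteqP; split => x /=; rewrite in_itv /= ltNge ler_norml; case: (_ && _).
Qed.

Lemma measurable_abs_gt (s : R) : measurable [set x : R | s < `|x|].
Proof. by rewrite abs_gtE; exact: measurableC. Qed.

Lemma laplace_tail d (T : measurableType d) (P : probability T R)
    (Y : {RV P >-> R}) (s : R) : is_laplace b Y -> 0 < s ->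
  P (Y @^-1` [set x | s < `|x|]) = (expR (- s / b))%:E.
Proof.
move=> Ylap s_gt0.
have mI : measurable (`[(- s)%R, 0%R[ : set R) by [].
have mJ : measurable (`[0%R, s] : set R) by [].
rewrite abs_gtE (@itv_bndbnd_setU _ _ _ (BLeft 0%R)) ?bnd_simp ?oppr_le0 ?ltW//.
rewrite -preimage_setC probability_setC; last exact/measurable_funPTI/measurableU.
rewrite preimage_setU measureU; last 3 first.
- exact: measurable_funPTI.
- exact: measurable_funPTI.
- rewrite -preimage_setI; apply/seteqP; split => x //=.
  by rewrite !in_itv /= => -[/andP[_ ?] /andP[? _]]; lra.
transitivity (1 - (\int[mu]_(x in `[(- s)%R, 0%R[) (laplace_pdf b x)%:E +
                   \int[mu]_(x in `[0%R, s]) (laplace_pdf b x)%:E))%E.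
  by rewrite -(Ylap _ mI) -(Ylap _ mJ).
rewrite integral_itv_bndo_bndc; last first.
  apply/measurable_EFinP/measurable_funTS.
  exact: continuous_measurable_fun (@continuous_laplace_pdf b).
rewrite integral_laplace_pdf_itvNc0// integral_laplace_pdf_itv0c// -EFinD.
by congr EFin; field.
Qed.

Lemma laplace_tail_ln d (T : measurableType d) (P : probability T R)
    (Y : {RV P >-> R}) (M : R) : is_laplace b Y -> 1 < M ->
  P (Y @^-1` [set x | b * ln M < `|x|]) = (M^-1)%:E.
Proof.
move=> Ylap M_gt1; rewrite laplace_tail//; last by rewrite mulr_gt0// ln_gt0.
by rewrite mulNr mulrAC divff ?gt_eqF// mul1r expRN lnK// posrE (lt_trans ltr01).
Qed.

End laplace_tail.

Lemma measure_bigsetU_le d (T : ringOfSetsType d) (R : realFieldType)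
    (mu : {measure set T -> \bar R}) (F : nat -> set T) (p : R) (n : nat) :
  (forall i, (i < n)%N -> measurable (F i)) ->
  (forall i, (i < n)%N -> (mu (F i) <= p%:E)%E) ->
  (mu (\big[setU/set0]_(i < n) F i) <= (n%:R * p)%:E)%E.
Proof.
move=> mF muF; apply: le_trans (Boole_inequality _ mF) _.
rewrite mulr_natl -[X in _ *+ X]card_ord -sumr_const -sumEFin.
by apply: lee_sum => i _; exact: muF.
Qed.

Lemma half_le_ln {R : realType} (x : R) : 2 <= x -> 2^-1 <= ln x.
Proof.
move=> x_ge2; apply: le_trans (_ : ln 2 <= ln x); last by rewrite ler_ln ?posrE//; lra.
have := expR_ge1Dx (- ln (2 : R)); rewrite expRN lnK ?posrE//; lra.
Qed.

Lemma two_le_ratio {R : realFieldType} (m : nat) (beta : R) :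
  (0 < m)%N -> 0 < beta <= 1 -> 2 <= 2 * m%:R / beta.
Proof.
move=> m_gt0 /andP[beta_gt0 beta_le1]; rewrite ler_pdivlMr//.
have : 1 <= m%:R :> R by rewrite ler1n.
nra.
Qed.

Section laplace_noises_bounded.
Context {R : realType} d (T : measurableType d) (P : probability T R).
Variables (bw bv : R) (w v : nat -> {RV P >-> R}).
Hypotheses (bw_gt0 : 0 < bw) (bv_gt0 : 0 < bv).
Hypotheses (w_laplace : forall i, is_laplace bw (w i))
           (v_laplace : forall i, is_laplace bv (v i)).

Lemma laplace_noises_bounded_whp (m : nat) (beta : R) : 0 < beta <= 1 ->
  let q := ln (2 * m%:R / beta) in
  exists E : set T, measurable E /\ (1 - beta%:E <= P E)%E /\
    forall om, E om -> forall i, (i < m)%N ->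
      `|w i om| <= bw * q /\ `|v i om| <= bv * q.
Proof.
move=> beta_itv q; have beta_gt0 : 0 < beta by case/andP: beta_itv.
have mtail (Y : {RV P >-> R}) s : measurable (Y @^-1` [set x | s < `|x|]).
  by apply: measurable_funPTI; exact: measurable_abs_gt.
pose bad i := w i @^-1` [set x | bw * q < `|x|] `|` v i @^-1` [set x | bv * q < `|x|].
have mbad i : measurable (bad i) by exact: measurableU.
have Pbad i : (i < m)%N -> (P (bad i) <= (beta / m%:R)%:E)%E.
  move=> im; have M_gt1 : 1 < 2 * m%:R / beta.
    by apply: lt_le_trans (two_le_ratio (leq_ltn_trans (leq0n i) im) beta_itv); lra.
  apply: le_trans (measureU2 _ (mtail _ _) (mtail _ _)) _.
  have -> : beta / m%:R = (2 * m%:R / beta)^-1 + (2 * m%:R / beta)^-1.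
    by rewrite invf_div; field; rewrite pnatr_eq0 -lt0n (leq_ltn_trans _ im).
  rewrite EFinD; apply: leeD.
  - by rewrite -(laplace_tail_ln bw_gt0 (w_laplace i) M_gt1).
  - by rewrite -(laplace_tail_ln bv_gt0 (v_laplace i) M_gt1).
exists (~` \big[setU/set0]_(i < m) bad i); split.
  by apply: measurableC; apply: bigsetU_measurable.
split.
  rewrite probability_setC; last by apply: bigsetU_measurable.
  apply: leeB => //.
  apply: le_trans (measure_bigsetU_le (fun i _ => mbad i) Pbad) _.
  rewrite lee_fin; have [->|m_neq0] := eqVneq m 0%N; first by rewrite mul0r ltW.
  by rewrite mulrC divfK ?pnatr_eq0.
move=> om good i im; rewrite -bigcup_mkord in good.
have /not_orP[wi vi] : ~ bad i om by move=> badi; apply: good; exists i.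
by split; rewrite leNgt; apply/negP.
Qed.

End laplace_noises_bounded.

Section threshold_monitor_answers.
Context {R : realType} {X : Type}.
Variables (eps delta t k : R) (A : seq bool -> X -> R) (S : seq X).
Variables (w v : nat -> R) (i : nat).

Let fS := qeval (tm_f eps delta t k A S w v i) (tm_S eps delta t k A S w v i).
Let Delta := tm_Delta eps delta.

Lemma tm_answer_top_ge :
  tm_answer eps delta t k A S w v i -> t - (`|w i| + Delta) <= fS.
Proof.
rewrite /tm_answer /tm_fhat -leNgt -/fS -/Delta => top.
have wle : w i <= `|w i| by exact: ler_norm.
have minD : Num.min (v i) Delta <= Delta by rewrite ge_min lexx orbT.
lra.
Qed.

Lemma tm_answer_bot_le : 0 <= Delta ->
  ~~ tm_answer eps delta t k A S w v i -> fS <= t + (`|w i| + `|v i|).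
Proof.
rewrite /tm_answer /tm_fhat negbK -/fS -/Delta => Delta_ge0 bot.
have wN : - `|w i| <= w i by exact: lerNnormlW.
have vN : - `|v i| <= v i by exact: lerNnormlW.
have minN : - `|v i| <= Num.min (v i) Delta.
  by rewrite le_min vN (le_trans _ Delta_ge0)// oppr_le0.
lra.
Qed.

End threshold_monitor_answers.

(* [L] is the Laplace scale of the [v_i], [L * ln L] the cap [Delta] and [q]
   the logarithmic factor of the union bound. *)
Lemma threshold_error_budget {R : realType} (L q : R) : 1 < L -> 2^-1 <= q ->
  10 * (L * ln L) * q + L * ln L <= 12 * L * q * (1 + ln L) /\
  10 * (L * ln L) * q + L * q <= 12 * L * q * (1 + ln L).
Proof.
move=> L_gt1 q_ge; have l_gt0 : 0 < ln L by rewrite ln_gt0.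
have Ll_gt0 : 0 < L * ln L by rewrite mulr_gt0//; lra.
by split; nra.
Qed.
Theorem theorem3p1 :
  exists C : nat,
  forall (R : realType) (d : measure_display) (T : measurableType d)
    (P : probability T R) (X : Type)
    (S : seq X) (eps delta t k : R) (m : nat)
    (A : seq bool -> X -> R)
    (w v : nat -> {RV P >-> R}),
    0 < eps -> 0 < delta -> delta < 1 -> 1 < eps^-1 * ln delta^-1 ->
    (forall h x, 0 <= A h x <= 1) ->
    (forall i, is_laplace (10 * tm_Delta eps delta) (w i)) ->
    (forall i, is_laplace (eps^-1 * ln delta^-1) (v i)) ->
    mutually_independent
      (fun j : nat + nat => match j with inl i => w i | inr i => v i end) ->
    forall beta : R, 0 < beta ->
    let err := C%:R * (eps^-1 * ln delta^-1) * ln (2 * m%:R / beta)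
               * (1 + ln (eps^-1 * ln delta^-1)) in
    exists E : set T, measurable E /\ (1 - beta%:E <= P E)%E /\
      forall om, E om ->
        forall i, (i < m)%N ->
          let wo := fun j => w j om in
          let vo := fun j => v j om in
          let fi := tm_f eps delta t k A S wo vo i in
          let Si := tm_S eps delta t k A S wo vo i in
          (tm_answer eps delta t k A S wo vo i -> t - err <= qeval fi Si) /\
          (~~ tm_answer eps delta t k A S wo vo i -> qeval fi Si <= t + err).
Proof.
exists 12%N => R d T P X S eps delta t k m A w v eps_gt0 delta_gt0 delta_lt1 L_gt1
  _ w_laplace v_laplace _ beta beta_gt0.
set L := eps^-1 * ln delta^-1 in L_gt1 v_laplace * => err.
have [beta_gt1 | beta_le1] := ltP 1 beta.
  exists set0; split=> //; split=> //.
  by rewrite measure0 lee_fin subr_le0 ltW.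
have DeltaE : tm_Delta eps delta = L * ln L by [].
have Delta_gt0 : 0 < L * ln L by apply: mulr_gt0; [lra | exact: ln_gt0].
have bw_gt0 : 0 < 10 * tm_Delta eps delta by rewrite DeltaE; lra.
have L_gt0 : 0 < L by lra.
have beta_itv : 0 < beta <= 1 by rewrite beta_gt0 beta_le1.
have [E [mE [PE good]]] :=
  laplace_noises_bounded_whp bw_gt0 L_gt0 w_laplace v_laplace m beta_itv.
exists E; split=> //; split=> // om Eom i im wo vo fi Si.
have [wi vi] := good om Eom i im.
have q_ge : 2^-1 <= ln (2 * m%:R / beta).
  exact/half_le_ln/(two_le_ratio (leq_ltn_trans (leq0n i) im) beta_itv).
have [budget_top budget_bot] := threshold_error_budget L_gt1 q_ge.
rewrite DeltaE in wi; rewrite /err /fi /Si /wo /vo; split => [top | bot].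
- have := tm_answer_top_ge top; rewrite DeltaE; lra.
- have := tm_answer_bot_le (ltW Delta_gt0) bot; lra.
Qed.
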